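(* Let $G$ be a connected graph that is not complete and let $K\subseteq V(G)$ be a nonempty set of universal vertices of $G$. Let $G_K$ be the graph obtained from $G$ by adding a new vertex $x$ with $N_{G_K}(x)=K$. Then $\chi(\mathcal{R}(G_K))=\chi(\mathcal{R}(G))$.
   Context: For a connected graph $G$, a search tree on $G$ is a rooted tree with vertex set $V(G)$ defined recursively: its root is some vertex $r\in V(G)$, and the children of $r$ are the roots of search trees on the connected components of $G-r$. For a rooted tree $T$ and $w\in V(T)$, $T|w$ denotes the subtree rooted at $w$. Let $T$ be a search tree on $G$, let $v$ be a child of $u$ in $T$, and let $p$ be the parent of $u$ (if it exists). The $uv$-rotation transforms $T$ into the search tree $T'$ in which: $u$ is a child of $v$ and $v$ is a child of $p$ (or $v$ is the root if $u$ was the root); every subtree of $u$ in $T$ other than $T|v$ is a subtree of $u$ in $T'$; and every subtree $S$ of $v$ in $T$ is a subtree of $u$ in $T'$ if $u$ is adjacent in $G$ to some vertex of $S$, and a subtree of $v$ in $T'$ otherwise. The rotation graph $\mathcal{R}(G)$ is the graph whose vertices are the search trees on $G$, two being adjacent iff they differ by one rotation. $\chi$ denotes chromatic number. A vertex is universal if it is adjacent to all other vertices. *)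

From mathcomp Require Import all_boot.
From mathcomp Require Import boolp.
Set Implicit Arguments. Unset Strict Implicit. Unset Printing Implicit Defensive.

Section SearchTrees.
Variable T : finType.
Variable e : rel T. (* a finite simple graph: e symmetric and irreflexive *)

Definition restr (S : {set T}) : rel T := [rel a b | [&& a \in S, b \in S & e a b]].

(* G[S] is connected (S nonempty is checked separately where needed) *)
Definition connected_in (S : {set T}) : Prop :=
  forall a b, a \in S -> b \in S -> connect (restr S) a b.

Definition component_of (S C : {set T}) : Prop :=
  [/\ C \subset S, C != set0, connected_in C &
      forall a b, a \in C -> b \in S :\: C -> ~~ e a b].

(* A rooted tree with vertex set V(G) is encoded by its parent map
   par : T -> option T (None = root). *)
Definition ptree := {ffun T -> option T}.

(* is_stree par S r : the restriction of par to S is a search tree on G[S]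
   rooted at r (the parent of r itself is not constrained here). *)
Inductive is_stree (par : ptree) : {set T} -> T -> Prop :=
| STree (S : {set T}) (r : T) :
    r \in S -> connected_in S ->
    (forall C, component_of (S :\ r) C ->
       exists2 c, c \in C & par c = Some r /\ is_stree par C c) ->
    is_stree par S r.

Definition is_search_tree (par : ptree) : Prop :=
  exists r, par r = None /\ is_stree par setT r.

Definition parrel (par : ptree) : rel T := [rel a b | par a == Some b].
Definition subtree (par : ptree) (w : T) : {set T} :=
  [set z | connect (parrel par) z w].

(* the uv-rotation, where v is a child of u *)
Definition rotate (par : ptree) (u v : T) : ptree :=
  [ffun z => if z == v then par u
             else if z == u then Some v
             else if par z == Some v then
               (if [exists y in subtree par z, e u y] then Some u else Some v)
             else par z].

Definition rotation (par par' : ptree) : Prop :=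
  exists u v, par v = Some u /\ par' = rotate par u v.

Definition radj (t t' : ptree) : Prop :=
  [/\ is_search_tree t, is_search_tree t', t != t' & (rotation t t' \/ rotation t' t)].

Definition rcolorable (k : nat) : Prop :=
  exists f : ptree -> nat,
    (forall t, is_search_tree t -> f t < k) /\
    (forall t t', radj t t' -> f t != f t').

Lemma rcolorable_exists : exists k, `[< rcolorable k >].
Proof.
exists #|{: ptree}|; apply/asboolP.
exists (fun t => nat_of_ord (enum_rank t)); split.
  by move=> t _; exact: ltn_ord.
move=> t t' [_ _ ntt' _]; apply/negP => /eqP /ord_inj /enum_rank_inj Htt'.
by rewrite Htt' eqxx in ntt'.
Qed.

Definition chi_R : nat := ex_minn rcolorable_exists.

End SearchTrees.

(* G_K : G plus a new vertex (None) whose neighbourhood is exactly K *)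
Definition addv (T : finType) (e : rel T) (K : {set T}) : rel (option T) :=
  fun a b => match a, b with
             | Some a, Some b => e a b
             | None, Some b => b \in K
             | Some a, None => a \in K
             | None, None => false
             end.

(** Deleting the new vertex x (its child, if any, is reattached to the parent
    of x) maps search trees on G_K onto search trees on G, and putting x at the
    root above a search tree on G is a right inverse of this map that preserves
    rotations; hence chi(R(G)) <= chi(R(G_K)).

    Because the vertices of K are universal, x has at most one child.  A rotation
    not involving x survives the deletion of x as a rotation, while a rotation
    involving x does not change the tree left after deleting x.  In the latter case
    x is rotated with its parent p, and the subtree of x changes from S to
    S + {p} unless x is a leaf; so the label l(S) := 2 if S = {x} and
    |S| mod 2 otherwise changes.  Therefore, if g properly colours R(G) with
    c >= 3 colours, T |-> (g(T - x) + l(subtree of x in T)) mod c properly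
    colours R(G_K).

    Finally c >= 3 always holds: for non-adjacent a, c and a universal k, hang
    all other vertices as a path above {a, k, c}; the five search trees on
    {a, k, c} then form a 5-cycle in R(G). *)

From mathcomp Require Import all_boot boolp zify.
Set Implicit Arguments. Unset Strict Implicit. Unset Printing Implicit Defensive.

(** [anc par y z]: [z] is [y] or an ancestor of [y]. *)
Notation anc par := (connect (parrel par)).

Lemma connect_ind (T : finType) (rl : rel T) (P : T -> Prop) a b :
  connect rl a b -> P a -> (forall p q, P p -> rl p q -> P q) -> P b.
Proof.
move=> /connectP [p Hp ->] Pa HP; elim: p a Pa Hp => [|x p IH] a Pa //=.
by case/andP=> Hax Hp; apply: IH Hp; exact: HP Pa Hax.
Qed.

Lemma connect_map (T T' : finType) (rl : rel T) (rl' : rel T') (f : T -> T') a b :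
  (forall p q, rl p q -> rl' (f p) (f q)) -> connect rl a b -> connect rl' (f a) (f b).
Proof.
move=> Hf Hab; apply: (connect_ind (P := fun y => connect rl' (f a) (f y)) Hab) => // p q Hp Hpq.
by apply: connect_trans Hp (connect1 _); exact: Hf.
Qed.

Lemma connect_last (T : finType) (rl : rel T) a b :
  connect rl a b -> a != b -> exists2 p, connect rl a p & rl p b.
Proof.
case/connectP=> s; elim/last_ind: s => [|s x _] /=; first by move=> _ ->; rewrite eqxx.
rewrite rcons_path last_rcons => /andP [Hp Hl] -> _.
by exists (last a s) => //; apply/connectP; exists s.
Qed.

Lemma connect_exit (T : finType) (rl : rel T) (A : {pred T}) a b :
  connect rl a b -> a \in A -> b \notin A ->
  exists p q, [/\ p \in A, q \notin A & rl p q].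
Proof.
move=> Hab aA bA; case: (boolP [exists p, exists q, [&& p \in A, q \notin A & rl p q]]).
  by case/existsP => p /existsP [q /and3P [pA qA pq]]; exists p, q.
move=> /existsPn noexit; exfalso; move/negP: bA; apply.
apply: (connect_ind (P := fun y => y \in A) Hab aA) => p q pA pq.
by apply/negPn/negP => qA; move/existsPn: (noexit p) => /(_ q); rewrite pA qA pq.
Qed.

Section ParentMaps.
Variable T : finType.
Implicit Types (par : ptree T) (a b p y z w : T).

Definition climb par z : T := odflt z (par z).

Lemma par_anc par a b : par a = Some b -> anc par a b.
Proof. by move=> H; apply: connect1; apply/eqP. Qed.

Lemma anc_climb par y : anc par y (climb par y).
Proof. by rewrite /climb; case E: (par y) => [b|] //=; exact: par_anc. Qed.

Lemma ancP par y z : reflect (exists n, iter n (climb par) y = z) (anc par y z).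
Proof.
apply: (iffP idP).
  case/connectP=> p; elim: p y => [|x p IH] y /=; first by move=> _ ->; exists 0.
  case/andP=> /eqP Hy Hp Hz; have [n Hn] := IH _ Hp Hz.
  by exists n.+1; rewrite iterSr /climb Hy.
case=> n; elim: n y => [|n IH] y; first by move=> /= ->.
by rewrite iterSr => /IH; exact: connect_trans (anc_climb _ _).
Qed.

Lemma anc_ind par z (P : T -> Prop) : P z ->
  (forall y w, y != z -> par y = Some w -> anc par w z -> P w -> P y) ->
  forall y, anc par y z -> P y.
Proof.
move=> Pz HP y /connectP [s]; elim: s y => [|x s IH] y /=; first by move=> _ <-.
case/andP=> /eqP Hy Hs Hz; case: (eqVneq y z) => [-> //|yz].
have Hxz : anc par x z by apply/connectP; exists s.
exact: HP yz Hy Hxz (IH x Hs Hz).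
Qed.

Lemma anc_cases par y z : anc par y z -> y = z \/ exists2 w, par y = Some w & anc par w z.
Proof.
move: y; apply: (anc_ind (P := fun y => y = z \/ exists2 w, par y = Some w & anc par w z)).
  by left.
by move=> y w _ Hw Hwz _; right; exists w.
Qed.

Lemma anc_total par y a b : anc par y a -> anc par y b -> anc par a b || anc par b a.
Proof.
case/ancP=> m Hm; case/ancP=> n Hn; case: (leqP m n) => Hmn.
  by apply/orP; left; apply/ancP; exists (n - m); rewrite -Hm -iterD subnK.
by apply/orP; right; apply/ancP; exists (m - n); rewrite -Hn -iterD subnK // ltnW.
Qed.

Lemma anc_child par y w : anc par y w -> y != w -> exists2 c, par c = Some w & anc par y c.
Proof.
move=> Hyw yw; have [c Hcw Hc] := connect_last Hyw yw.
by exists c => //; apply/eqP.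
Qed.

Lemma subtree_leaf par c : (forall y, par y != Some c) -> subtree par c = [set c].
Proof.
move=> H; apply/setP => y; rewrite !inE; apply/idP/idP => [Hy|/eqP ->]; last exact: connect0.
apply/negPn/negP => yc; have [p _] := connect_last Hy yc.
by rewrite /parrel /= (negbTE (H p)).
Qed.

Definition rooted par : Prop := exists2 r, par r = None & forall z, anc par z r.

Section Rooted.
Variable par : ptree T.
Hypothesis par_rooted : rooted par.

Lemma anc_antisym a b : anc par a b -> anc par b a -> a = b.
Proof.
(* From [a], iterating [climb] is periodic, yet it reaches the fixpoint [r]. *)
case: par_rooted => r Hr Hreach /ancP [m Hm] /ancP [n Hn].
have Hcyc k : iter (k * (n + m)) (climb par) a = a.
  by elim: k => // k IH; rewrite mulSn iterD IH iterD Hm Hn.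
case: (posnP (n + m)) => Hnm.
  by move: Hnm => /eqP; rewrite addn_eq0 => /andP [_ /eqP Hm0]; rewrite -Hm Hm0.
have iter_r k : iter k (climb par) r = r by elim: k => //= k ->; rewrite /climb Hr.
have [p Hp] := ancP _ _ _ (Hreach a).
have Ha : a = r by rewrite -(Hcyc p) -(subnK (leq_pmulr p Hnm)) iterD Hp iter_r.
by rewrite -Hm Ha iter_r.
Qed.

Lemma par_neq_self a : par a != Some a.
Proof.
apply/eqP => Ha; case: par_rooted => r Hr Hreach.
have [n Hn] := ancP _ _ _ (Hreach a).
have : iter n (climb par) a = a by elim: n {Hn} => //= n ->; rewrite /climb Ha.
by rewrite Hn => Ear; rewrite -Ear Hr in Ha.
Qed.

Lemma par_not_anc a b : par a = Some b -> ~~ anc par b a.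
Proof.
move=> Hab; apply/negP => Hba; have Eab := anc_antisym (par_anc Hab) Hba.
by subst b; move: (par_neq_self a); rewrite Hab eqxx.
Qed.

Lemma sibling_anc a b p : par a = Some p -> par b = Some p -> anc par a b -> a = b.
Proof.
move=> Ha Hb Hab; case: (anc_cases Hab) => [//|[w Hw Hwb]].
move: Hw; rewrite Ha => -[Ew]; subst w.
by have := par_not_anc Hb; rewrite Hwb.
Qed.

End Rooted.
End ParentMaps.

Section Components.
Variables (T : finType) (e : rel T).
Hypothesis esym : symmetric e.
Implicit Types (S C D : {set T}).

Lemma restr_sym S : symmetric (restr e S).
Proof. by move=> a b; rewrite /restr /= esym andbCA. Qed.

Lemma connected_in_from S a :
  (forall b, b \in S -> connect (restr e S) a b) -> connected_in e S.
Proof.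
move=> Ha b c bS cS; apply: connect_trans (Ha c cS).
by rewrite (sym_connect_sym (restr_sym S)); exact: Ha.
Qed.

Lemma component_maximal S C D a : component_of e S C -> D \subset S ->
  connected_in e D -> a \in D -> a \in C -> D \subset C.
Proof.
case=> _ _ _ Cclosed DS Dconn aD aC; apply/subsetP => b bD.
apply: (connect_ind (P := fun x => x \in C) (Dconn a b aD bD) aC) => p q pC /and3P [_ qD epq].
apply/negPn/negP => qC.
have qSC : q \in S :\: C by rewrite inE qC (subsetP DS).
by move: (Cclosed _ _ pC qSC); rewrite epq.
Qed.

Lemma component_eq S C C' z : component_of e S C -> component_of e S C' ->
  z \in C -> z \in C' -> C = C'.
Proof.
move=> HC HC' zC zC'; case: (HC) => CS _ Cconn _; case: (HC') => C'S _ C'conn _.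
apply/eqP; rewrite eqEsubset.
by rewrite (component_maximal HC' CS Cconn zC zC') (component_maximal HC C'S C'conn zC' zC).
Qed.

Lemma component_exists S z : z \in S -> exists2 C, component_of e S C & z \in C.
Proof.
move=> zS; pose C := [set y in S | connect (restr e S) z y].
have zC : z \in C by rewrite inE zS connect0.
have reach_C y : y \in C -> connect (restr e C) z y.
  rewrite inE => /andP [_ Hzy].
  suff /andP [] : (y \in C) && connect (restr e C) z y by [].
  apply: (connect_ind (P := fun y => (y \in C) && connect (restr e C) z y) Hzy).
    by rewrite zC connect0.
  move=> p q /andP [pC Hzp] /and3P [pS qS epq].
  have qC : q \in C.
    move: pC; rewrite !inE qS => /andP [_ Hzp'].
    by apply: connect_trans Hzp' (connect1 _); rewrite /restr /= pS qS.
  by rewrite qC; apply: connect_trans Hzp (connect1 _); rewrite /restr /= pC qC.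
exists C => //; split.
- by apply/subsetP => y; rewrite inE => /andP [].
- by apply/set0Pn; exists z.
- exact: connected_in_from reach_C.
- move=> a b; rewrite !inE => /andP [aS Hza] /andP [bNC bS].
  apply: contra bNC => eab; rewrite bS; apply: connect_trans Hza (connect1 _).
  by rewrite /restr /= aS bS.
Qed.

Lemma card_component_lt S r C : component_of e (S :\ r) C -> r \in S -> #|C| < #|S|.
Proof. by case=> CS _ _ _ rS; apply: proper_card; exact: sub_proper_trans CS (properD1 rS). Qed.

Lemma connected_in_set1 x : connected_in e [set x].
Proof. by move=> p q; rewrite !inE => /eqP -> /eqP ->; exact: connect0. Qed.

Lemma connected_in_univ S k : (forall y, y != k -> e k y) -> k \in S -> connected_in e S.
Proof.
move=> k_univ kS; apply: (connected_in_from (a := k)) => y yS.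
case: (eqVneq y k) => [->|yk]; first exact: connect0.
by apply: connect1; rewrite /restr /= kS yS k_univ.
Qed.

Lemma connected_in_pair x y : e x y -> connected_in e [set x; y].
Proof.
move=> exy; apply: (connected_in_from (a := x)) => z; rewrite !inE.
by case/orP => /eqP ->; [exact: connect0 | apply: connect1; rewrite /restr /= !inE !eqxx orbT].
Qed.

End Components.

(** * Search trees *)

Definition search_tree_spec (T : finType) (e : rel T) (par : ptree T) : Prop :=
  [/\ rooted par, forall a b, e a b -> anc par a b \/ anc par b a
    & forall w, connected_in e (subtree par w)].

Section SearchTrees.
Variables (T : finType) (e : rel T).
Hypothesis esym : symmetric e.
Implicit Types (par : ptree T) (S C : {set T}).

Section SpecTree.
Variable par : ptree T.
Hypothesis par_spec : search_tree_spec e par.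

Let par_rooted : rooted par. Proof. by case: par_spec. Qed.

Lemma edge_out_subtree a b w : e a b -> anc par a w -> ~~ anc par b w -> anc par w b.
Proof.
case: par_spec => _ par_edge _ eab Haw Hbw.
case: (par_edge _ _ eab) => [Hab|Hba]; last by rewrite (connect_trans Hba Haw) in Hbw.
by case/orP: (anc_total Hab Haw) => // Hbw'; rewrite Hbw' in Hbw.
Qed.

Lemma component_subtree_child w C : component_of e (subtree par w :\ w) C ->
  exists2 c, par c = Some w & C = subtree par c.
Proof.
move=> HC; case: (HC) => CS /set0Pn [a aC] Cconn _.
have := subsetP CS a aC; rewrite !inE => /andP [aw Haw].
have [c Hc Hac] := anc_child Haw aw; exists c => //.
have sub_c : subtree par c \subset subtree par w :\ w.
  apply/subsetP => z; rewrite !inE => Hz; apply/andP; split.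
    by apply: contraTneq Hz => ->; exact: par_not_anc Hc.
  exact: connect_trans Hz (par_anc Hc).
case: par_spec => _ _ par_conn; apply/eqP; rewrite eqEsubset.
rewrite (component_maximal HC sub_c (par_conn c) _ aC) ?inE // andbT.
apply/subsetP => b bC; rewrite inE.
apply: (connect_ind (P := fun p => anc par p c) (Cconn a b aC bC) Hac) => p q Hpc /and3P [_ qC epq].
have := subsetP CS q qC; rewrite !inE => /andP [qw Hqw].
apply/negPn/negP => Hqc; have Hcq := edge_out_subtree epq Hpc Hqc.
case: (anc_cases Hcq) => [Ecq|[w' Hw' Hw'q]]; first by rewrite Ecq connect0 in Hqc.
move: Hw' Hw'q; rewrite Hc => -[<-] Hwq.
by rewrite (anc_antisym par_rooted Hwq Hqw) eqxx in qw.
Qed.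

End SpecTree.

Lemma spec_stree par : search_tree_spec e par -> is_search_tree e par.
Proof.
move=> par_spec; case: (par_spec) => -[r Hr Hreach] _ par_conn; exists r; split => //.
have Hall w : is_stree e par (subtree par w) w.
  have [n] := ubnP #|subtree par w|; elim: n w => // n IH w Hlt.
  constructor; [by rewrite inE connect0 | exact: par_conn | move=> C HC].
  have [c Hc EC] := component_subtree_child par_spec HC.
  have ltC : #|C| < n by apply: leq_trans (card_component_lt HC _) Hlt; rewrite inE connect0.
  by exists c; rewrite EC ?inE ?connect0 //; split => //; apply: IH; rewrite -EC.
by have -> : [set: T] = subtree par r by apply/setP=> z; rewrite !inE Hreach.
Qed.

Lemma stree_anc par S r z : is_stree e par S r -> z \in S -> anc par z r.
Proof.
have [n] := ubnP #|S|; elim: n S r => // n IH S r Hlt Hst.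
case: Hst Hlt => {}S {}r rS _ Hcomp Hlt zS.
case: (eqVneq z r) => [->|zr]; first exact: connect0.
have zSr : z \in S :\ r by rewrite in_setD1 zr.
have [C HC zC] := component_exists esym zSr.
have [c _ [Hc HstC]] := Hcomp C HC.
have ltC : #|C| < n by apply: leq_trans (card_component_lt HC rS) _.
exact: connect_trans (IH _ _ ltC HstC zC) (par_anc Hc).
Qed.

Lemma stree_edge_anc par S r a b : is_stree e par S r -> a \in S -> b \in S -> e a b ->
  anc par a b \/ anc par b a.
Proof.
have [n] := ubnP #|S|; elim: n S r a b => // n IH S r a b Hlt Hst.
have Hr := stree_anc Hst; case: Hst Hlt Hr => {}S {}r rS _ Hcomp Hlt Hr aS bS eab.
case: (eqVneq a r) => [->|ar]; first by right; exact: Hr.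
case: (eqVneq b r) => [->|br]; first by left; exact: Hr.
have aSr : a \in S :\ r by rewrite in_setD1 ar.
have [C HC aC] := component_exists esym aSr.
have bC : b \in C.
  apply/negPn/negP => bNC; case: HC => _ _ _ Cclosed.
  by move: (Cclosed a b aC); rewrite !inE bNC br bS eab => /(_ isT).
have [c _ [_ HstC]] := Hcomp C HC.
have ltC : #|C| < n by apply: leq_trans (card_component_lt HC rS) _.
exact: (IH C c a b ltC HstC aC bC eab).
Qed.

Lemma stree_subtree par S r w : rooted par -> is_stree e par S r -> w \in S ->
  exists2 Sw, is_stree e par Sw w & forall z, z \in S -> anc par z w -> z \in Sw.
Proof.
move=> root_par; have [n] := ubnP #|S|; elim: n S r => // n IH S r Hlt Hst.
have Hr := stree_anc Hst; case: Hst Hlt Hr => {}S {}r rS Sconn Hcomp Hlt Hr wS.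
case: (eqVneq w r) => [->|wr]; first by exists S => //; constructor.
have wSr : w \in S :\ r by rewrite in_setD1 wr.
have [C HC wC] := component_exists esym wSr.
have [c cC [Hc HstC]] := Hcomp C HC.
have ltC : #|C| < n by apply: leq_trans (card_component_lt HC rS) _.
have [Sw HSw HzSw] := IH _ _ ltC HstC wC.
exists Sw => // z zS Hzw; apply: HzSw => //.
have zr : z != r.
  by apply: contra_neq wr => Ezr; apply: (anc_antisym root_par (Hr w wS)); rewrite -Ezr.
have zSr : z \in S :\ r by rewrite in_setD1 zr.
have [C' HC' zC'] := component_exists esym zSr.
have [c' c'C' [Hc' HstC']] := Hcomp C' HC'.
have Hzc' := stree_anc HstC' zC'; have Hwc := stree_anc HstC wC.
have Ecc' : c = c'.
  case/orP: (anc_total Hzw Hzc') => [Hwc'|Hc'w].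
    case/orP: (anc_total Hwc Hwc') => H; first exact: (sibling_anc root_par Hc Hc' H).
    by symmetry; exact: (sibling_anc root_par Hc' Hc H).
  by symmetry; exact: (sibling_anc root_par Hc' Hc (connect_trans Hc'w Hwc)).
by subst c'; rewrite (component_eq HC HC' cC c'C').
Qed.

Lemma stree_spec par : is_search_tree e par -> search_tree_spec e par.
Proof.
case=> r [Hr Hst]; have Hreach z : anc par z r by exact: stree_anc Hst (in_setT z).
have root_par : rooted par by exists r.
split => // [a b eab|w]; first exact: stree_edge_anc Hst (in_setT a) (in_setT b) eab.
have [Sw HSw HzSw] := stree_subtree root_par Hst (in_setT w).
suff -> : subtree par w = Sw by case: HSw.
apply/setP=> z; rewrite inE; apply/idP/idP => [Hzw|]; first exact: HzSw.
exact: stree_anc HSw.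
Qed.

Lemma search_treeP par : is_search_tree e par <-> search_tree_spec e par.
Proof. by split; [exact: stree_spec | exact: spec_stree]. Qed.

Lemma stree_leaf par r : is_stree e par [set r] r.
Proof.
constructor; first by rewrite inE.
  by move=> a b; rewrite !inE => /eqP -> /eqP ->; exact: connect0.
by move=> C [CS /set0Pn [y yC] _ _]; move: (subsetP CS y yC); rewrite setDv inE.
Qed.

Lemma stree_step par S r c : r \in S -> connected_in e S -> connected_in e (S :\ r) ->
  c \in S :\ r -> par c = Some r -> is_stree e par (S :\ r) c -> is_stree e par S r.
Proof.
move=> rS Sconn Srconn cSr pc Hst; constructor => // C HC.
suff -> : C = S :\ r by exists c.
case: (HC) => CS /set0Pn [y yC] _ _; apply/eqP; rewrite eqEsubset CS /=.
exact: component_maximal HC (subxx _) Srconn (subsetP CS y yC) yC.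
Qed.

End SearchTrees.

(** * Rotations *)

Section Rotations.
Variables (T : finType) (e : rel T).

Lemma rotateE (t : ptree T) u v y : rotate e t u v y =
  if y == v then t u else if y == u then Some v
  else if t y == Some v then
    (if [exists y' in subtree t y, e u y'] then Some u else Some v)
  else t y.
Proof. by rewrite ffunE. Qed.

Variables (t : ptree T) (u v : T).
Local Notation t' := (rotate e t u v).

Lemma rotate_v : t' v = t u.
Proof. by rewrite rotateE eqxx. Qed.

Lemma rotate_other y : y != v -> y != u -> t y != Some v -> t' y = t y.
Proof. by move=> yv yu ty; rewrite rotateE (negbTE yv) (negbTE yu) (negbTE ty). Qed.

Hypothesis t_rooted : rooted t.
Hypothesis tv : t v = Some u.

Lemma rotate_uv : u != v.
Proof. by apply: contra_eqN tv => /eqP ->; rewrite (negbTE (par_neq_self t_rooted v)). Qed.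

Lemma rotate_tu : t u != Some v.
Proof. by apply/eqP => tu; move: (par_not_anc t_rooted tv); rewrite (par_anc tu). Qed.

Lemma rotate_u : t' u = Some v.
Proof. by rewrite rotateE (negbTE rotate_uv) eqxx. Qed.

Lemma rotate_child y : t y = Some v -> t' y = Some u \/ t' y = Some v.
Proof.
move=> ty; have yv : y != v.
  by apply/eqP => Eyv; move: ty rotate_uv; rewrite Eyv tv => -[->]; rewrite eqxx.
have yu : y != u by apply/eqP => Eyu; move: rotate_tu; rewrite -Eyu ty eqxx.
by rewrite rotateE ty eqxx (negbTE yv) (negbTE yu); case: ifP; [left | right].
Qed.

Lemma rotate_anc z y : z != u -> z != v -> anc t' y z = anc t y z.
Proof.
move=> zu zv; apply/idP/idP; move: y.
  apply: (anc_ind (P := fun y => anc t y z)); first exact: connect0.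
  move=> y w _ Hw _ Hwz; case: (eqVneq y v) => [Eyv|yv].
    subst y; rewrite rotate_v in Hw.
    exact: connect_trans (par_anc tv) (connect_trans (par_anc Hw) Hwz).
  case: (eqVneq y u) => [Eyu|yu].
    subst y; move: Hw; rewrite rotate_u => -[Ew]; subst w.
    case: (anc_cases Hwz) => [Evz|[w' Hw' Hw'z]]; first by rewrite Evz eqxx in zv.
    by move: Hw' Hw'z; rewrite tv => -[<-].
  case: (eqVneq (t y) (Some v)) => ty; last first.
    by rewrite rotate_other // in Hw; exact: connect_trans (par_anc Hw) Hwz.
  case: (rotate_child ty) => H; move: Hw; rewrite H => -[Ew]; subst w.
    exact: connect_trans (par_anc ty) (connect_trans (par_anc tv) Hwz).
  exact: connect_trans (par_anc ty) Hwz.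
apply: (anc_ind (P := fun y => anc t' y z)); first exact: connect0.
move=> y w _ Hw _ Hwz; case: (eqVneq y v) => [Eyv|yv].
  subst y; move: Hw; rewrite tv => -[Ew]; subst w.
  case: (anc_cases Hwz) => [Euz|[w' Hw' Hw'z]]; first by rewrite Euz eqxx in zu.
  by move: Hw' Hw'z; rewrite rotate_u => -[<-].
case: (eqVneq y u) => [Eyu|yu].
  subst y; apply: connect_trans (par_anc rotate_u) (connect_trans _ Hwz).
  by apply: par_anc; rewrite rotate_v.
case: (eqVneq (t y) (Some v)) => ty; last first.
  by rewrite -(rotate_other yv yu ty) in Hw; exact: connect_trans (par_anc Hw) Hwz.
move: Hw; rewrite ty => -[Ew]; subst w.
case: (rotate_child ty) => H; last exact: connect_trans (par_anc H) Hwz.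
exact: connect_trans (par_anc H) (connect_trans (par_anc rotate_u) Hwz).
Qed.

Lemma rotate_subtree_v : subtree t' v = subtree t u.
Proof.
apply/setP => y; rewrite !inE; apply/idP/idP; move: y.
  apply: (anc_ind (P := fun y => anc t y u)); first exact: par_anc.
  move=> y w yv Hw _ Hwu; case: (eqVneq y u) => [->|yu]; first exact: connect0.
  case: (eqVneq (t y) (Some v)) => ty.
    exact: connect_trans (par_anc ty) (par_anc tv).
  by rewrite rotate_other // in Hw; exact: connect_trans (par_anc Hw) Hwu.
apply: (anc_ind (P := fun y => anc t' y v)); first exact: par_anc rotate_u.
move=> y w yu Hw _ Hwv; case: (eqVneq y v) => [->|yv]; first exact: connect0.
case: (eqVneq (t y) (Some v)) => ty.
  case: (rotate_child ty) => H; last exact: par_anc H.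
  exact: connect_trans (par_anc H) (par_anc rotate_u).
by rewrite -(rotate_other yv yu ty) in Hw; exact: connect_trans (par_anc Hw) Hwv.
Qed.

End Rotations.

Lemma rotation_radj (T : finType) (e : rel T) (t t' : ptree T) : symmetric e ->
  is_search_tree e t -> is_search_tree e t' -> rotation e t t' -> radj e t t'.
Proof.
move=> esym Ht Ht' rot_tt'; split => //; last by left.
case: rot_tt' => u [v [tv ->]]; have [t_rooted _ _] := stree_spec esym Ht.
apply/eqP => Et; move: (par_neq_self t_rooted u).
by rewrite -(rotate_v e t u v) -Et tv eqxx.
Qed.

(** * A 5-cycle in R(G) *)

Section PathOver.
Variables (T : finType) (e : rel T) (k : T).
Hypothesis esym : symmetric e.
Hypothesis k_univ : forall y, y != k -> e k y.
Variables (s : seq T) (B : {set T}).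
Hypothesis s_uniq : uniq s.
Hypothesis mem_s : forall z, (z \in s) = (z \notin B).
Hypothesis kB : k \in B.

Definition path_end : option T := if s is x :: s' then Some (last x s') else None.

(** The vertices of [s] form a path from the root (the head of [s]) down to
    [path_end], below which hangs the tree [bot] on [B]. *)
Definition path_over (bot : T -> option T) : ptree T :=
  [ffun z => if z \in s then (if index z s is i.+1 then Some (nth z s i) else None) else bot z].

Lemma path_overE bot z : path_over bot z =
  if z \in s then (if index z s is i.+1 then Some (nth z s i) else None) else bot z.
Proof. by rewrite ffunE. Qed.

Lemma path_over_B bot z : z \in B -> path_over bot z = bot z.
Proof. by move=> zB; rewrite path_overE mem_s zB. Qed.

Lemma path_over_s bot z w : z \in s -> path_over bot z = Some w -> w \in s.
Proof.
rewrite path_overE => zs; rewrite zs; case E: (index z s) => [|i] // [<-]; apply: mem_nth.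
by have := index_mem z s; rewrite zs E => /ltnW.
Qed.

Lemma path_end_B x : x \in B -> path_end != Some x.
Proof.
move=> xB; rewrite /path_end; case: s mem_s => [|y s'] // Hs; apply/eqP => -[Ex].
by have := mem_last y s'; rewrite Ex Hs xB.
Qed.

Lemma path_over_stree bot b : b \in B -> bot b = path_end ->
  is_stree e (path_over bot) B b -> is_search_tree e (path_over bot).
Proof.
move=> bB botb HstB; pose S i := [set z | (z \in drop i s) || (z \in B)].
have S_conn i : connected_in e (S i).
  by apply: (connected_in_univ esym k_univ); rewrite !inE kB orbT.
have Hall i : i <= size s -> is_stree e (path_over bot) (S i) (nth b s i).
  have [n] := ubnP (size s - i); elim: n i => // n IH i Hn Hi.
  case: (ltnP i (size s)) => Hi'; last first.
    have -> : i = size s by apply/eqP; rewrite eqn_leq Hi Hi'.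
    rewrite nth_default //; suff -> : S (size s) = B by [].
    by apply/setP => z; rewrite !inE drop_size.
  have Hd := drop_nth b Hi'.
  have rB : nth b s i \notin B by rewrite -mem_s mem_nth.
  have ES : S i :\ nth b s i = S i.+1.
    apply/setP => z; rewrite !inE Hd inE; case: (eqVneq z (nth b s i)) => [->|zr] //=.
    by move: (drop_uniq i s_uniq); rewrite Hd /= => /andP [/negbTE -> _]; rewrite (negbTE rB).
  apply: (stree_step (c := nth b s i.+1)); rewrite ?ES //; first by rewrite !inE Hd inE eqxx.
  - rewrite !inE; case: (ltnP i.+1 (size s)) => H; first by rewrite (drop_nth b H) inE eqxx.
    by rewrite nth_default // bB orbT.
  - rewrite path_overE; case: (ltnP i.+1 (size s)) => H.
      by rewrite mem_nth // index_uniq //; congr Some; exact: set_nth_default.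
    have Ei : i.+1 = size s by apply/eqP; rewrite eqn_leq H Hi'.
    rewrite nth_default ?Ei // mem_s bB botb /path_end; move: Ei; case: s => [|y s'] //= [->].
    by rewrite (nth_last b (y :: s')).
  - by apply: IH; lia.
exists (nth b s 0); split.
  rewrite path_overE; case E: s => [|y s'] /=; first by move: botb; rewrite /path_end E.
  by rewrite inE eqxx.
suff -> : [set: T] = S 0 by exact: Hall.
by apply/setP => z; rewrite !inE drop0 mem_s; case: (z \in B).
Qed.

Lemma subtree_path_over_leaf bot x : x \in B -> (forall z, z \in B -> bot z != Some x) ->
  subtree (path_over bot) x = [set x].
Proof.
move=> xB Hx; apply: subtree_leaf => y; case: (boolP (y \in s)) => ys.
  by apply/eqP => /(path_over_s ys); rewrite mem_s xB.
by rewrite path_over_B ?Hx // -[y \in B]negbK -mem_s.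
Qed.

Lemma rotate_path_over bot1 bot2 u v : u \in B -> v \in B ->
  (forall z, z \in B -> rotate e (path_over bot1) u v z = bot2 z) ->
  rotate e (path_over bot1) u v = path_over bot2.
Proof.
move=> uB vB HB; apply/ffunP => z; case: (boolP (z \in s)) => zs; last first.
  by rewrite HB ?path_over_B // -[z \in B]negbK -mem_s.
have notB x : x \in B -> z != x by move=> xB; apply: contraTneq zs => ->; rewrite mem_s xB.
have zv : path_over bot1 z != Some v by apply/eqP => /(path_over_s zs); rewrite mem_s vB.
by rewrite rotate_other ?notB // !path_overE zs.
Qed.

End PathOver.

Lemma exists_in_set1 (T : finType) (x : T) (P : pred T) : [exists y in [set x], P y] = P x.
Proof. by apply/exists_inP/idP => [[y /set1P -> //]|Px]; exists x; rewrite ?inE. Qed.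

Lemma lt2_neq_neq x y z : x < 2 -> y < 2 -> z < 2 -> x != y -> y != z -> x = z.
Proof. by case: x => [|[|//]]; case: y => [|[|//]]; case: z => [|[|//]]. Qed.

Section Pentagon.
Variables (T : finType) (e : rel T) (a c k : T).
Hypothesis esym : symmetric e.
Hypothesis eirr : irreflexive e.
Hypothesis k_univ : forall y, y != k -> e k y.
Hypothesis ac : a != c.
Hypothesis nac : ~~ e a c.

Let ak : a != k.
Proof. by apply: contraNneq nac => Eak; rewrite Eak k_univ // -Eak eq_sym. Qed.
Let ck : c != k.
Proof. by apply: contraNneq nac => Eck; rewrite Eck esym k_univ // -Eck. Qed.

Let B := [set a; k; c].
Let s := [seq z <- enum T | z \notin B].
Let s_uniq : uniq s. Proof. by rewrite filter_uniq // enum_uniq. Qed.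
Let mem_s z : (z \in s) = (z \notin B). Proof. by rewrite mem_filter mem_enum andbT. Qed.
Let aB : a \in B. Proof. by rewrite !inE eqxx. Qed.
Let kB : k \in B. Proof. by rewrite !inE eqxx orbT. Qed.
Let cB : c \in B. Proof. by rewrite !inE eqxx !orbT. Qed.

Let B_neq := (negbTE ak, negbTE ck, negbTE ac, eq_sym k a, eq_sym k c, eq_sym c a,
  negbTE (path_end_B mem_s aB), negbTE (path_end_B mem_s kB), negbTE (path_end_B mem_s cB)).

Let B_cases z : z \in B -> [\/ z = a, z = k | z = c].
Proof. by rewrite !inE => /orP [/orP [] | ] /eqP ->; [apply: Or31 | apply: Or32 | apply: Or33]. Qed.

(** On [B], [chain x1 x2] is the path [x1 - x2 - (third vertex)]. *)
Definition chain_bot (x1 x2 z : T) : option T :=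
  if z == x1 then path_end s else if z == x2 then Some x1 else Some x2.
Definition chain (x1 x2 : T) : ptree T := path_over s (chain_bot x1 x2).
Definition star_bot z : option T := if z == k then path_end s else Some k.
Definition star : ptree T := path_over s star_bot.

Local Ltac simp_B := do 2 rewrite /chain_bot /star_bot /= ?(inj_eq Some_inj) ?eqxx ?B_neq /=.

Lemma chain_stree x1 x2 x3 : [set x1; x2; x3] = B -> uniq [:: x1; x2; x3] -> e x2 x3 ->
  is_search_tree e (chain x1 x2).
Proof.
move=> EB U e23; move: (U); rewrite /= !inE negb_or => /andP [/andP [n12 n13] /andP [n23 _]].
have x1B : x1 \in B by rewrite -EB !inE eqxx.
have x2B : x2 \in B by rewrite -EB !inE eqxx orbT.
have x3B : x3 \in B by rewrite -EB !inE eqxx !orbT.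
have D1 : B :\ x1 = [set x2; x3].
  apply/setP => z; rewrite -EB !inE.
  by case: (eqVneq z x1) => [->|]; rewrite ?(negbTE n12) ?(negbTE n13).
have D2 : [set x2; x3] :\ x2 = [set x3].
  by apply/setP => z; rewrite !inE; case: (eqVneq z x2) => [->|]; rewrite ?(negbTE n23).
apply: (path_over_stree esym k_univ s_uniq mem_s kB x1B); first by rewrite /chain_bot eqxx.
apply: (stree_step (c := x2) x1B); rewrite ?D1.
- exact: (connected_in_univ esym k_univ kB).
- exact: connected_in_pair.
- by rewrite !inE eqxx.
- by rewrite (path_over_B mem_s) // /chain_bot eq_sym (negbTE n12) eqxx.
apply: (stree_step (c := x3)); rewrite ?D2.
- by rewrite !inE eqxx.
- exact: connected_in_pair.
- exact: connected_in_set1.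
- by rewrite !inE eqxx.
- by rewrite (path_over_B mem_s) // /chain_bot eq_sym (negbTE n13) eq_sym (negbTE n23).
- exact: stree_leaf.
Qed.

Lemma star_stree : is_search_tree e star.
Proof.
apply: (path_over_stree esym k_univ s_uniq mem_s kB kB); first by rewrite /star_bot eqxx.
constructor => //; first exact: (connected_in_univ esym k_univ).
move=> C [CS /set0Pn [y yC] Cconn _].
have Bk_ac p : p \in B :\ k -> p = a \/ p = c.
  rewrite !inE => /andP [pk]; case/orP => [/orP []|] /eqP Ep; subst p;
  by [left | rewrite eqxx in pk | right].
have Bk_indep p q : p \in B :\ k -> q \in B :\ k -> ~~ e p q.
  by move=> /Bk_ac [] -> /Bk_ac [] ->; rewrite ?eirr // esym.
have yB : y \in B :\ k := subsetP CS y yC.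
have -> : C = [set y].
  apply/setP => z; rewrite inE; apply/idP/eqP => [zC|->//].
  apply: (connect_ind (P := fun p => p = y) (Cconn y z yC zC)) => // p q _ /and3P [pC qC epq].
  by rewrite (negbTE (Bk_indep p q (subsetP CS p pC) (subsetP CS q qC))) in epq.
exists y; rewrite ?inE // ; split; last exact: stree_leaf.
move: yB; rewrite !inE => /andP [yk yB].
by rewrite (path_over_B mem_s) ?inE // /star_bot (negbTE yk).
Qed.

Lemma rotate_chain_akc : rotate e (chain a k) a k = star.
Proof.
apply: (rotate_path_over mem_s aB kB) => z /B_cases [] ->;
  rewrite rotateE !(path_over_B mem_s) //; simp_B => //.
rewrite (subtree_path_over_leaf mem_s cB) ?exists_in_set1 ?(negbTE nac) //.
by move=> y /B_cases [] ->; simp_B.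
Qed.

Lemma rotate_star : rotate e star k c = chain c k.
Proof.
by apply: (rotate_path_over mem_s kB cB) => z /B_cases [] ->;
  rewrite rotateE !(path_over_B mem_s) //; simp_B.
Qed.

Lemma rotate_chain_cka : rotate e (chain c k) k a = chain c a.
Proof.
by apply: (rotate_path_over mem_s kB aB) => z /B_cases [] ->;
  rewrite rotateE !(path_over_B mem_s) //; simp_B.
Qed.

Lemma rotate_chain_cak : rotate e (chain c a) c a = chain a c.
Proof.
apply: (rotate_path_over mem_s cB aB) => z /B_cases [] ->;
  rewrite rotateE !(path_over_B mem_s) //; simp_B => //.
rewrite (subtree_path_over_leaf mem_s kB) ?exists_in_set1 1?esym ?k_univ //.
by move=> y /B_cases [] ->; simp_B.
Qed.

Lemma rotate_chain_ack : rotate e (chain a c) c k = chain a k.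
Proof.
by apply: (rotate_path_over mem_s cB kB) => z /B_cases [] ->;
  rewrite rotateE !(path_over_B mem_s) //; simp_B.
Qed.

Local Ltac simp_tv := rewrite /chain /star (path_over_B mem_s) //; simp_B.

Lemma pentagon_not_rcolorable2 : ~ rcolorable e 2.
Proof.
have setB x1 x2 x3 : [set x1; x2; x3] =i B -> [set x1; x2; x3] = B by move/setP.
have T1 : is_search_tree e (chain a k).
  by apply: (chain_stree (x3 := c)); rewrite /= ?inE ?B_neq ?k_univ.
have T3 : is_search_tree e (chain c k).
  apply: (chain_stree (x3 := a)); rewrite /= ?inE ?B_neq ?k_univ //.
  by apply: setB => z; rewrite !inE; case: (z == a); case: (z == k); case: (z == c).
have T4 : is_search_tree e (chain c a).
  apply: (chain_stree (x3 := k)); rewrite /= ?inE ?B_neq 1?esym ?k_univ //.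
  by apply: setB => z; rewrite !inE; case: (z == a); case: (z == k); case: (z == c).
have T5 : is_search_tree e (chain a c).
  apply: (chain_stree (x3 := k)); rewrite /= ?inE ?B_neq 1?esym ?k_univ //.
  by apply: setB => z; rewrite !inE; case: (z == a); case: (z == k); case: (z == c).
case=> f [f_lt f_proper].
have step t t' u v : is_search_tree e t -> is_search_tree e t' -> t v = Some u ->
    rotate e t u v = t' -> f t != f t'.
  by move=> Ht Ht' tv Et; apply/f_proper/rotation_radj => //; exists u, v; rewrite Et.
have f12 : f (chain a k) != f star.
  by apply: (step _ _ _ _ T1 star_stree _ rotate_chain_akc); simp_tv.
have f23 : f star != f (chain c k).
  by apply: (step _ _ _ _ star_stree T3 _ rotate_star); simp_tv.
have f34 : f (chain c k) != f (chain c a).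
  by apply: (step _ _ _ _ T3 T4 _ rotate_chain_cka); simp_tv.
have f45 : f (chain c a) != f (chain a c).
  by apply: (step _ _ _ _ T4 T5 _ rotate_chain_cak); simp_tv.
have f51 : f (chain a c) != f (chain a k).
  by apply: (step _ _ _ _ T5 T1 _ rotate_chain_ack); simp_tv.
have f13 := lt2_neq_neq (f_lt _ T1) (f_lt _ star_stree) (f_lt _ T3) f12 f23.
have f35 := lt2_neq_neq (f_lt _ T3) (f_lt _ T4) (f_lt _ T5) f34 f45.
by rewrite -f35 -f13 eqxx in f51.
Qed.

End Pentagon.

Section ChromaticNumber.
Variables (T : finType) (e : rel T).

Lemma rcolorable_chi_R : rcolorable e (chi_R e).
Proof. by rewrite /chi_R; case: ex_minnP => n /asboolP. Qed.

Lemma chi_R_min n : rcolorable e n -> chi_R e <= n.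
Proof. by move=> Hn; rewrite /chi_R; case: ex_minnP => m _; apply; apply/asboolP. Qed.

Lemma rcolorable_le m n : m <= n -> rcolorable e m -> rcolorable e n.
Proof. by move=> mn [f [f_lt f_proper]]; exists f; split => // t /f_lt /leq_trans; apply. Qed.

Lemma chi_R_gt2 : ~ rcolorable e 2 -> 2 < chi_R e.
Proof.
move=> not2; rewrite ltnNge; apply: contra_notN not2 => /rcolorable_le; apply.
exact: rcolorable_chi_R.
Qed.

End ChromaticNumber.

(** * Adding the vertex x *)

Section AddVertex.
Variables (T : finType) (e : rel T) (K : {set T}).
Hypothesis esym : symmetric e.
Local Notation eK := (addv e K).
Implicit Types (t : ptree T) (tx : ptree (option T)).

Lemma addv_sym : symmetric eK.
Proof. by case=> [a|] [b|] //=; exact: esym. Qed.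

(** The parent [Some None] is the new vertex [x]. *)
Definition root_x t : ptree (option T) :=
  [ffun z => if z is Some z' then Some (t z') else None].

Definition del_x tx : ptree T :=
  [ffun z => match tx (Some z) with
             | Some (Some w) => Some w
             | Some None => odflt None (tx None)
             | None => None
             end].

Lemma root_xE t z : root_x t z = if z is Some z' then Some (t z') else None.
Proof. by rewrite ffunE. Qed.

Lemma del_xE tx z : del_x tx z = match tx (Some z) with
  | Some (Some w) => Some w | Some None => odflt None (tx None) | None => None end.
Proof. by rewrite ffunE. Qed.

Lemma anc_from_x tx y : (forall w, tx None != Some (Some w)) -> anc tx None y -> y = None.
Proof.
move=> xtop Hy; apply: (connect_ind (P := fun y => y = None) Hy) => // _ [w|//] -> /eqP Hw.
by move: (xtop w); rewrite Hw eqxx.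
Qed.

Lemma del_x_par_anc tx a w : del_x tx a = Some w -> anc tx (Some a) (Some w).
Proof.
rewrite del_xE; case E: (tx (Some a)) => [[w'|]|] //=; first by case=> <-; exact: par_anc.
case E2: (tx None) => [[w'|]|] //= [<-].
exact: connect_trans (par_anc E) (par_anc E2).
Qed.

Lemma del_x_anc tx a b : anc (del_x tx) a b = anc tx (Some a) (Some b).
Proof.
apply/idP/idP; first move: a.
  apply: (anc_ind (P := fun a => anc tx (Some a) (Some b))); first exact: connect0.
  by move=> y w _ Hw _ Hwb; exact: connect_trans (del_x_par_anc Hw) Hwb.
(* For [None] the claim is that the descendants of [x] descend from its parent. *)
pose P (y : option T) : Prop := if y is Some a then is_true (anc (del_x tx) a b)
  else forall w, tx None = Some (Some w) -> anc (del_x tx) w b.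
move=> Hab; suff : P (Some a) by [].
move: Hab; apply: (anc_ind (P := P)); first exact: connect0.
move=> [y|] w' _ Hw' Hw'b Pw'; last by move=> w Hw; move: Hw Pw'; rewrite Hw' => -[->].
case: w' Hw' Hw'b Pw' => [c|] Hw' Hw'b Pw'.
  by apply: connect_trans Pw'; apply: par_anc; rewrite del_xE Hw'.
case E: (tx None) => [[w|]|].
  by apply: connect_trans (Pw' _ E); apply: par_anc; rewrite del_xE Hw' E.
all: have xtop w : tx None != Some (Some w) by rewrite E.
all: by have := anc_from_x xtop Hw'b.
Qed.

Lemma del_x_root_x t : del_x (root_x t) = t.
Proof. by apply/ffunP => z; rewrite del_xE !root_xE; case: (t z) => [w|] //=; rewrite root_xE. Qed.

Lemma root_x_inj : injective root_x.
Proof. by move=> t t' Ht; rewrite -(del_x_root_x t) Ht del_x_root_x. Qed.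

Lemma root_x_anc t a b : anc (root_x t) (Some a) (Some b) = anc t a b.
Proof. by rewrite -del_x_anc del_x_root_x. Qed.

Lemma anc_root_x_x t y : anc (root_x t) None y -> y = None.
Proof. by apply: anc_from_x => w; rewrite root_xE. Qed.

Lemma root_x_rotate t u v :
  root_x (rotate e t u v) = rotate eK (root_x t) (Some u) (Some v).
Proof.
apply/ffunP => -[y|]; rewrite rotateE !root_xE //.
rewrite rotateE !(inj_eq Some_inj) /=.
case: (y == v) => //; case: (y == u) => //; case: (t y == Some v) => //.
suff -> : [exists y' in subtree (root_x t) (Some y), eK (Some u) y'] =
          [exists y' in subtree t y, e u y'] by case: ifP.
apply/existsP/existsP => [[[y'|]]|[y']]; rewrite !inE.
- by rewrite root_x_anc => /andP [H1 H2]; exists y'; rewrite inE H1.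
- by case/andP => /anc_root_x_x.
- by case/andP => H1 H2; exists (Some y'); rewrite inE root_x_anc H1.
Qed.

Lemma connect_restr_Some (S : {set T}) (S' : {set option T}) a b :
  (forall z, (Some z \in S') = (z \in S)) ->
  connect (restr e S) a b -> connect (restr eK S') (Some a) (Some b).
Proof. by move=> HS; apply: connect_map => p q; rewrite /restr /= !HS. Qed.

Lemma root_x_spec t : (forall a b, connect e a b) -> K != set0 ->
  search_tree_spec e t -> search_tree_spec eK (root_x t).
Proof.
move=> econn /set0Pn [k kK] [[r Hr Hreach] Hedge Hconn].
have reach_x z : anc (root_x t) z None.
  case: z => [z|]; last exact: connect0.
  apply: connect_trans (_ : anc _ (Some r) None); first by rewrite root_x_anc.
  by apply: par_anc; rewrite root_xE Hr.
split; first by exists None; rewrite ?root_xE.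
  case=> [a|] [b|] //= => [/Hedge|_|_]; [by rewrite !root_x_anc | by left | by right].
case=> [w|].
  move=> [a|] [b|]; rewrite !inE => Ha Hb //;
    try by [move: Ha => /anc_root_x_x | move: Hb => /anc_root_x_x].
  apply: (@connect_restr_Some (subtree t w)); first by move=> z; rewrite !inE root_x_anc.
  by apply: Hconn; rewrite inE -root_x_anc.
apply: (@connected_in_from _ _ addv_sym _ (Some k)) => -[b|] _; last first.
  by apply: connect1; rewrite /restr /= !inE !reach_x.
apply: (@connect_restr_Some setT) => [z|]; first by rewrite !inE reach_x.
by rewrite (eq_connect (_ : restr e setT =2 e)) // => p q; rewrite /restr /= !inE.
Qed.

Lemma rcolorable_of_addv k : (forall a b, connect e a b) -> K != set0 ->
  rcolorable eK k -> rcolorable e k.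
Proof.
move=> econn Kn0 [f [f_lt f_proper]].
have root_x_stree t : is_search_tree e t -> is_search_tree eK (root_x t).
  by move=> /(search_treeP esym) Ht; apply/(search_treeP addv_sym); exact: root_x_spec.
exists (f \o root_x); split => [t /root_x_stree /f_lt //|t t' [Ht Ht' Htt' Hrot]].
apply: f_proper; split; [exact: root_x_stree | exact: root_x_stree | |].
  by apply: contra Htt' => /eqP /root_x_inj ->.
by case: Hrot => -[u [v [Hv ->]]]; [left | right];
  exists (Some u), (Some v); rewrite root_x_rotate root_xE Hv.
Qed.

Hypothesis Kuniv : forall k, k \in K -> forall y, y != k -> e k y.

Lemma connect_restr_del_x (S : {set T}) (S' : {set option T}) a b :
  (forall z, (Some z \in S') = (z \in S)) ->
  connect (restr eK S') (Some a) (Some b) -> connect (restr e S) a b.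
Proof.
(* A path through [x] enters and leaves it at universal vertices, which are adjacent. *)
move=> HS Hab.
pose P (y : option T) : Prop := if y is Some y' then is_true (connect (restr e S) a y')
  else exists2 k, k \in K & (Some k \in S') && connect (restr e S) a k.
suff : P (Some b) by [].
apply: (connect_ind (P := P) Hab); first exact: connect0.
move=> [p|] [q|] //= Hp /and3P [pS' qS' epq].
- by apply: connect_trans Hp (connect1 _); rewrite /restr /= -!HS pS' qS'.
- by exists p => //; rewrite pS'.
- case: Hp => k kK /andP [kS' Hak]; case: (eqVneq q k) => [-> //|qk].
  by apply: connect_trans Hak (connect1 _); rewrite /restr /= -!HS kS' qS' Kuniv.
Qed.

Lemma adj_subtree_del_x tx y u : y != u ->
  [exists y' in subtree tx (Some y), eK (Some u) y'] =
  [exists y' in subtree (del_x tx) y, e u y'].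
Proof.
move=> yu; apply/existsP/existsP => [[[y'|]]|[y']]; rewrite !inE.
- by rewrite -del_x_anc => /andP [H1 H2]; exists y'; rewrite inE H1.
- by case/andP => _ uK; exists y; rewrite inE connect0 Kuniv // eq_sym.
- by case/andP => H1 H2; exists (Some y'); rewrite inE -del_x_anc H1.
Qed.

Section XTree.
Variable tx : ptree (option T).
Hypothesis tx_spec : search_tree_spec eK tx.

Let tx_rooted : rooted tx. Proof. by case: tx_spec. Qed.
Let tx_edge a b : eK a b -> anc tx a b \/ anc tx b a.
Proof. by case: tx_spec => _ H _; exact: H. Qed.
Let tx_conn w : connected_in eK (subtree tx w). Proof. by case: tx_spec. Qed.

Lemma anc_univ k y : k \in K -> y != k ->
  anc tx (Some y) (Some k) \/ anc tx (Some k) (Some y).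
Proof. by move=> kK yk; apply: tx_edge; rewrite /= esym Kuniv. Qed.

Lemma x_desc_univ y : y != None -> anc tx y None -> exists2 k, k \in K & anc tx (Some k) None.
Proof.
move=> yx Hy; have Hyx : connect (restr eK (subtree tx None)) y None.
  by apply: tx_conn; rewrite inE ?connect0.
have [[k|] Hk /and3P [kS _ kK]] := connect_last Hyx yx; last by [].
by exists k; rewrite inE in kS.
Qed.

Lemma x_child_anc_univ c k : tx c = Some None -> k \in K -> anc tx (Some k) None ->
  anc tx (Some k) c.
Proof.
case: c => [c|] tc kK Hk; last by move: (par_neq_self tx_rooted None); rewrite tc eqxx.
case: (eqVneq c k) => [->|ck]; first exact: connect0.
case: (anc_univ kK ck) => // Hck.
case: (anc_cases Hck) => [[Eck]|[w Hw Hwk]]; first by rewrite Eck eqxx in ck.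
by move: Hw Hwk; rewrite tc => -[<-] Hxk; move: (anc_antisym tx_rooted Hk Hxk).
Qed.

Lemma x_child_unique c1 c2 : tx c1 = Some None -> tx c2 = Some None -> c1 = c2.
Proof.
move=> tc1 tc2; have c1x : c1 != None.
  by apply/eqP => E; move: tc1; rewrite E; apply/eqP; exact: par_neq_self.
have [k kK Hk] := x_desc_univ c1x (par_anc tc1).
case/orP: (anc_total (x_child_anc_univ tc1 kK Hk) (x_child_anc_univ tc2 kK Hk)) => H.
  exact: (sibling_anc tx_rooted tc1 tc2 H).
by symmetry; exact: (sibling_anc tx_rooted tc2 tc1 H).
Qed.

Lemma x_child_subtree c y : tx c = Some None -> anc tx y None -> y = None \/ anc tx y c.
Proof.
move=> tc Hy; case: (eqVneq y None) => [->|yx]; [by left | right].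
by have [c' tc' Hyc'] := anc_child Hy yx; rewrite (x_child_unique tc' tc) in Hyc'.
Qed.

Lemma x_parent_subtree p y z : tx None = Some p -> y != None -> anc tx y None ->
  anc tx z p -> z = p \/ anc tx z None.
Proof.
move=> tp yx Hy Hzp; case: (eqVneq z p) => [->|zp]; [by left | right].
have [k kK Hk] := x_desc_univ yx Hy.
case: (boolP (anc tx z None)) => // Hzx; exfalso.
case: z Hzp zp Hzx => [z|] Hzp zp Hzx; last by rewrite connect0 in Hzx.
case: (eqVneq z k) => [Ezk|zk]; first by rewrite Ezk Hk in Hzx.
case: (anc_univ kK zk) => H; first by rewrite (connect_trans H Hk) in Hzx.
case/orP: (anc_total H Hk) => H'; first by rewrite H' in Hzx.
case: (anc_cases H') => [//|[w Hw Hwz]]; move: Hw Hwz; rewrite tp => -[<-] Hpz.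
by rewrite (anc_antisym tx_rooted Hzp Hpz) eqxx in zp.
Qed.

Lemma x_parent_adj u c : tx None = Some (Some u) -> tx c = Some None ->
  [exists y in subtree tx c, eK (Some u) y].
Proof.
move=> tu tc; have Hcu : anc tx c (Some u) := connect_trans (par_anc tc) (par_anc tu).
have uNc : ~~ anc tx (Some u) c.
  by apply/negP => Huc; move: (par_not_anc tx_rooted tu); rewrite (connect_trans Huc (par_anc tc)).
have Hconn : connect (restr eK (subtree tx (Some u))) c (Some u).
  by apply: tx_conn; rewrite inE ?connect0.
have cc : c \in subtree tx c by rewrite inE connect0.
have uc : Some u \notin subtree tx c by rewrite inE.
have [p [q [pc qc /and3P [_ qu epq]]]] := connect_exit Hconn cc uc.
rewrite !inE in pc qc qu.
have Hcq := edge_out_subtree tx_spec epq pc qc.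
case: (anc_cases Hcq) => [Ecq|[w Hw Hwq]]; first by rewrite Ecq connect0 in qc.
move: Hw Hwq; rewrite tc => -[<-] Hxq; apply/existsP; exists p; rewrite inE pc andTb.
case: (anc_cases Hxq) => [Eq|[w' Hw' Hw'q]].
  subst q; case: p pc epq => [p|//] pc pK /=; rewrite esym Kuniv //.
  by apply: contraNneq uNc => ->.
by move: Hw' Hw'q; rewrite tu => -[<-] Huq; rewrite -(anc_antisym tx_rooted qu Huq) addv_sym.
Qed.

Lemma del_x_spec (z0 : T) : search_tree_spec e (del_x tx).
Proof.
have root : rooted (del_x tx).
  case: tx_rooted => -[r|] tr Hreach.
    by exists r => [|z]; rewrite ?del_xE ?tr // del_x_anc.
  have [[c|] tc _] := anc_child (Hreach (Some z0)) isT; last first.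
    by move: (par_neq_self tx_rooted None); rewrite tc eqxx.
  exists c => [|z]; first by rewrite del_xE tc /= tr.
  rewrite del_x_anc; have [c' tc' Hzc'] := anc_child (Hreach (Some z)) isT.
  by rewrite (x_child_unique tc' tc) in Hzc'.
split => // [a b eab|w a b]; first by rewrite !del_x_anc; exact: tx_edge.
rewrite !inE !del_x_anc => Ha Hb.
apply: (@connect_restr_del_x _ (subtree tx (Some w))); first by move=> z; rewrite !inE del_x_anc.
by apply: tx_conn; rewrite inE.
Qed.

Lemma adj_subtree_x y u : tx (Some y) = Some None -> y != u ->
  [exists y' in subtree tx None, eK (Some u) y'] =
  [exists y' in subtree tx (Some y), eK (Some u) y'].
Proof.
move=> ty yu; apply/existsP/existsP => -[y']; rewrite !inE => /andP [Hy' uy'].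
  case: (x_child_subtree ty Hy') => [Ey'|Hy'y]; last by exists y'; rewrite inE Hy'y.
  by exists (Some y); move: uy'; rewrite Ey' inE connect0 /= => uK; rewrite Kuniv // eq_sym.
by exists y'; rewrite inE uy' (connect_trans Hy' (par_anc ty)).
Qed.

Lemma del_x_rotate u v : tx (Some v) = Some (Some u) ->
  del_x (rotate eK tx (Some u) (Some v)) = rotate e (del_x tx) u v.
Proof.
move=> tv.
have x_fixed : tx None != Some (Some v) -> rotate eK tx (Some u) (Some v) None = tx None.
  by move=> txv; rewrite rotate_other.
apply/ffunP => y; rewrite [RHS]rotateE.
case: (eqVneq y v) => [->|yv].
  rewrite del_xE rotate_v del_xE; case tu': (tx (Some u)) => [[w|]|] //=.
  rewrite x_fixed //; apply/eqP => txv; move: (par_not_anc tx_rooted tv).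
  by rewrite (connect_trans (par_anc tu') (par_anc txv)).
case: (eqVneq y u) => [->|yu]; first by rewrite del_xE (rotate_u eK tx_rooted tv).
have ySv : Some y != Some v by rewrite (inj_eq Some_inj).
have ySu : Some y != Some u by rewrite (inj_eq Some_inj).
rewrite del_xE rotateE (negbTE ySv) (negbTE ySu) [del_x tx y]del_xE.
case ty: (tx (Some y)) => [[w|]|] //=.
  case: (eqVneq w v) => [->|wv]; first by rewrite !eqxx (adj_subtree_del_x _ yu); case: ifP.
  by rewrite !(inj_eq Some_inj) (negbTE wv).
case: (eqVneq (tx None) (Some (Some v))) => txv; last first.
  rewrite x_fixed //; case: (tx None) txv => [[w|]|] //= wv.
  by rewrite (inj_eq Some_inj) in wv; rewrite (negbTE wv).
rewrite rotateE /= txv !eqxx /= (adj_subtree_x ty yu) (adj_subtree_del_x _ yu).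
by case: ifP.
Qed.

Lemma del_x_rotate_x_parent u : tx None = Some (Some u) ->
  del_x (rotate eK tx (Some u) None) = del_x tx.
Proof.
move=> txu; apply/ffunP => y; rewrite !del_xE.
case: (eqVneq y u) => [->|yu].
  rewrite (rotate_u eK tx_rooted txu) /= rotate_v.
  by case tu: (tx (Some u)) (rotate_tu tx_rooted txu) => [[w|]|].
have ySu : Some y != Some u by rewrite (inj_eq Some_inj).
case: (eqVneq (tx (Some y)) (Some None)) => ty.
  by rewrite rotateE /= (negbTE ySu) ty eqxx (x_parent_adj txu ty) txu.
by rewrite rotate_other //; case: (tx (Some y)) ty => [[]|].
Qed.

Lemma del_x_rotate_x_child v : tx (Some v) = Some None ->
  del_x (rotate eK tx None (Some v)) = del_x tx.
Proof.
move=> tv; apply/ffunP => y; rewrite !del_xE.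
case: (eqVneq y v) => [->|yv].
  rewrite rotate_v tv /=.
  by case: (tx None) (par_neq_self tx_rooted None) => [[w|]|].
have ySv : Some y != Some v by rewrite (inj_eq Some_inj).
case: (eqVneq (tx (Some y)) (Some (Some v))) => ty.
  case: (rotate_child eK tx_rooted tv ty) => ->; last by rewrite ty.
  by rewrite /= (rotate_u eK tx_rooted tv) ty.
rewrite rotate_other //; case: (eqVneq (tx (Some y)) (Some None)) => ty'.
  by move: ySv; rewrite (x_child_unique ty' tv) eqxx.
by case: (tx (Some y)) ty' => [[]|].
Qed.

Definition xlabel (S : {set option T}) : nat := if S == [set None] then 2 else #|S| %% 2.

Lemma xlabel_parent p : tx None = Some p ->
  xlabel (subtree tx None) != xlabel (subtree tx p).
Proof.
move=> txp; have px : p != None.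
  by apply/eqP => E; move: txp; rewrite E; apply/eqP; exact: par_neq_self.
have label_p : xlabel (subtree tx p) = #|subtree tx p| %% 2.
  rewrite /xlabel; case: ifP => // /eqP Ep.
  have : p \in subtree tx p by rewrite inE connect0.
  by rewrite Ep inE (negbTE px).
rewrite label_p /xlabel; case: ifP => [_|/eqP x_not_leaf]; first by rewrite neq_ltn ltn_mod orbT.
have [y yx Hy] : exists2 y, y != None & anc tx y None.
  apply/exists_inP; apply: contra_notT x_not_leaf => /exists_inPn no_desc.
  apply/setP => z; rewrite !inE; apply/idP/eqP => [Hz|->]; last exact: connect0.
  by apply/eqP; apply: contraTT Hz => zx; exact: no_desc.
have -> : subtree tx p = p |: subtree tx None.
  apply/setP => z; rewrite !inE; apply/idP/orP => [Hz|[/eqP ->|Hz]].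
  - by case: (x_parent_subtree txp yx Hy Hz) => ->; [left | right].
  - exact: connect0.
  - exact: connect_trans Hz (par_anc txp).
by rewrite cardsU1 inE (negbTE (par_not_anc tx_rooted txp)) add1n !modn2 /=; case: odd.
Qed.

End XTree.
End AddVertex.

(** * Colouring R(G_K) *)

Section ColourTransfer.
Variables (T : finType) (e : rel T) (K : {set T}).
Hypothesis esym : symmetric e.
Hypothesis Kuniv : forall k, k \in K -> forall y, y != k -> e k y.
Local Notation eK := (addv e K).
Variables (n : nat) (g : ptree T -> nat).
Hypothesis n_gt2 : 2 < n.
Hypothesis g_lt : forall t, is_search_tree e t -> g t < n.
Hypothesis g_proper : forall t t', radj e t t' -> g t != g t'.

Definition lift_colour (tx : ptree (option T)) : nat :=
  (g (del_x tx) + xlabel (subtree tx None)) %% n.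

Lemma xlabel_lt (S : {set option T}) : xlabel S < n.
Proof.
by apply: leq_ltn_trans n_gt2; rewrite /xlabel; case: ifP => // _; rewrite ltnW // ltn_pmod.
Qed.

Lemma lift_colour_rotate tx1 u v : search_tree_spec eK tx1 ->
  search_tree_spec eK (rotate eK tx1 u v) -> tx1 v = Some u ->
  lift_colour tx1 != lift_colour (rotate eK tx1 u v).
Proof.
move=> tx1_spec tx2_spec tv; have [tx1_rooted _ _] := tx1_spec; rewrite /lift_colour.
case: u v tv tx2_spec => [u|] [v|] tv tx2_spec;
  last by move: (par_neq_self tx1_rooted None); rewrite tv eqxx.
- have del_stree tx : search_tree_spec eK tx -> is_search_tree e (del_x tx).
    by move=> tx_spec; apply/(search_treeP esym); exact: (del_x_spec esym Kuniv tx_spec u).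
  have D1 := del_stree _ tx1_spec; have D2 := del_stree _ tx2_spec.
  have g_neq : g (del_x tx1) != g (del_x (rotate eK tx1 (Some u) (Some v))).
    apply: g_proper; apply: (rotation_radj esym) => //.
    by exists u, v; rewrite (del_x_rotate esym Kuniv tx1_spec tv) del_xE tv.
  have -> : subtree (rotate eK tx1 (Some u) (Some v)) None = subtree tx1 None.
    by apply/setP => z; rewrite !inE rotate_anc.
  by rewrite eqn_modDr !modn_small ?g_lt.
- rewrite (del_x_rotate_x_parent esym Kuniv tx1_spec tv) (rotate_subtree_v eK tx1_rooted tv).
  by rewrite eqn_modDl !modn_small ?xlabel_lt // (xlabel_parent esym Kuniv tx1_spec tv).
- rewrite (del_x_rotate_x_child esym Kuniv tx1_spec tv) -(rotate_subtree_v eK tx1_rooted tv) eq_sym.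
  rewrite eqn_modDl !modn_small ?xlabel_lt //.
  by rewrite (xlabel_parent esym Kuniv tx2_spec) ?(rotate_u eK tx1_rooted tv).
Qed.

Lemma rcolorable_addv : rcolorable eK n.
Proof.
have specP := search_treeP (addv_sym K esym).
exists lift_colour; split => [tx _|tx1 tx2 [/specP S1 /specP S2 _]].
  by rewrite ltn_mod (ltn_trans _ n_gt2).
by case=> -[u [v [tv E]]]; [|rewrite eq_sym]; subst; exact: lift_colour_rotate.
Qed.

End ColourTransfer.

Theorem proposition3p2 (T : finType) (e : rel T) (K : {set T}) :
  symmetric e -> irreflexive e ->
  (forall u v : T, connect e u v) ->
  (exists u v : T, u != v /\ ~~ e u v) ->
  K != set0 ->
  (forall k, k \in K -> forall y, y != k -> e k y) ->
  chi_R (addv e K) = chi_R e.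
Proof.
move=> esym eirr econn [a [c [ac nac]]] Kn0 Kuniv.
have [k kK] := set0Pn _ Kn0.
have chi_gt2 : 2 < chi_R e.
  exact/chi_R_gt2/(pentagon_not_rcolorable2 esym eirr (Kuniv k kK) ac nac).
have [g [g_lt g_proper]] := rcolorable_chi_R e.
apply/eqP; rewrite eqn_leq; apply/andP; split.
  exact/chi_R_min/(rcolorable_addv esym Kuniv chi_gt2 g_lt g_proper).
exact/chi_R_min/(rcolorable_of_addv esym econn Kn0)/rcolorable_chi_R.
Qed.
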